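(* Let $n\ge2$, $1\le k\le n-1$, $r\ge1$. Let $h$ be continuous on $[l_F,r_F]$ with $h^{(k+r-1)}$ continuous on $(l_F,r_F)$. If $l_F>-\infty$, $r_F=\infty$ and $F(x)=1-e^{-c(x-l_F)}$ for $x\ge l_F$ with some $c>0$, then \[ E[h^{(k+r-1)}(X(n))\mid X(n-k)=u,\ X(n+r)=v]=\frac{(k+r-1)!}{(k-1)!(r-1)!}\,{}_{r-1}M_{k-1}(u,v)\qquad (l_F<u<v<r_F). \]
   Context: $X_1,X_2,\dots$ are i.i.d. copies of a random variable $X$ with distribution function $F$; $l_F=\inf\{x:F(x)>0\}$, $r_F=\sup\{x:F(x)<1\}$. Upper record times: $L(1)=1$, $L(m)=\min\{j>L(m-1): X_j>X_{L(m-1)}\}$; upper record values $X(m)=X_{L(m)}$. With $R(x)=-\ln(1-F(x))$, conditional expectations given $X(n-k)=u$, $X(n+r)=v$ are taken with respect to the conditional density $\frac{(k+r-1)!}{(k-1)!(r-1)!}[\frac{R(t)-R(u)}{R(v)-R(u)}]^{k-1}[\frac{R(v)-R(t)}{R(v)-R(u)}]^{r-1}\frac{R'(t)}{R(v)-R(u)}$, $u<t<v$. For a function $h$, $M(u,v)=\frac{h(v)-h(u)}{v-u}$ ($u\ne v$) and ${}_iM_j(u,v)=\frac{\partial^{i+j}}{\partial u^i\partial v^j}M(u,v)$. *)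

From Stdlib Require Import Reals Lra Lia Arith Factorial.
Open Scope R_scope.

Definition Rhaz (F : R -> R) (x : R) : R := - ln (1 - F x).

Definition coefKR (k r : nat) : R :=
  INR (fact (k + r - 1)) / (INR (fact (k - 1)) * INR (fact (r - 1))).

(* Conditional density of X(n) at t given X(n-k)=u, X(n+r)=v;
   Rp is the derivative R' of R. *)
Definition cond_density (F Rp : R -> R) (k r : nat) (u v t : R) : R :=
  coefKR k r
  * ((Rhaz F t - Rhaz F u) / (Rhaz F v - Rhaz F u)) ^ (k - 1)
  * ((Rhaz F v - Rhaz F t) / (Rhaz F v - Rhaz F u)) ^ (r - 1)
  * (Rp t / (Rhaz F v - Rhaz F u)).

Definition is_integral (f : R -> R) (a b I : R) : Prop :=
  exists pr : Riemann_integrable f a b, RiemannInt pr = I.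

(* E[g(X(n)) | X(n-k)=u, X(n+r)=v] = I, i.e. the integral of g against
   the conditional density over (u,v) exists and equals I. *)
Definition cond_exp_is (F Rp : R -> R) (k r : nat) (g : R -> R) (u v I : R) : Prop :=
  is_integral (fun t => g t * cond_density F Rp k r u v t) u v I.

Definition Mdiff (h : R -> R) (u v : R) : R := (h v - h u) / (v - u).

Definition derivs_upto (h : R -> R) (Dh : nat -> R -> R) (m : nat) (a : R) : Prop :=
  (forall x, a < x -> Dh 0%nat x = h x) /\
  (forall j x, (j < m)%nat -> a < x -> derivable_pt_lim (Dh j) x (Dh (S j) x)).

(* P i j = d^{i+j}/du^i dv^j M on the open set {(u,v) : a < u < v},
   for j <= jm (with i = 0) and i <= im (with j = jm):
   first jm derivatives in v, then im derivatives in u. *)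
Definition mixed_partials (M : R -> R -> R) (P : nat -> nat -> R -> R -> R)
    (im jm : nat) (a : R) : Prop :=
  (forall x y, a < x -> x < y -> P 0%nat 0%nat x y = M x y) /\
  (forall j x y, (j < jm)%nat -> a < x -> x < y ->
     derivable_pt_lim (fun w => P 0%nat j x w) y (P 0%nat (S j) x y)) /\
  (forall i x y, (i < im)%nat -> a < x -> x < y ->
     derivable_pt_lim (fun w => P i jm w y) x (P (S i) jm x y)).

From Stdlib Require Import Reals Lra Lia.
From Coquelicot Require Import Coquelicot.
Open Scope R_scope.

(* Write B_f(p,q)(x,y) = \int_x^y f(t) (t-x)^p (y-t)^q dt and, for the
   successive derivatives D n = h^(n) of h,
       P_{i,j}(x,y) = B_{h^(i+j+1)}(j,i)(x,y) / (y-x)^(i+j+1)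
   (equivalently \int_0^1 h^(i+j+1)(x + s(y-x)) s^j (1-s)^i ds).
   Three rules for B -- the two endpoint derivatives (fundamental theorem of
   calculus), the recurrence B(p+1,q) = (y-x) B(p,q) - B(p,q+1), and
   integration by parts -- give P_{0,0} = M, d/dy P_{0,j} = P_{0,j+1} and
   d/dx P_{i,j} = P_{i+1,j}, so P_{r-1,k-1} is the mixed partial
   {r-1}M{k-1} of the statement.  For the exponential law the hazard
   R(x) = c (x - l) is affine, so the conditional density of X(n) is the
   Beta kernel coef * (t-u)^(k-1) (v-t)^(r-1) / (v-u)^(k+r-1), and the
   conditional expectation of h^(k+r-1)(X(n)) is coef * P_{r-1,k-1}(u,v). *)

Definition cont_on (a : R) (f : R -> R) : Prop :=
  forall t, a < t -> continuity_pt f t.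

Lemma derivable_pt_lim_val (f : R -> R) (x l1 l2 : R) :
  l1 = l2 -> derivable_pt_lim f x l1 -> derivable_pt_lim f x l2.
Proof. intros ->; exact (fun H => H). Qed.

Lemma RInt_lincomb (g1 g2 : R -> R) (c1 c2 x y : R) :
  ex_RInt g1 x y -> ex_RInt g2 x y ->
  RInt (fun t => c1 * g1 t + c2 * g2 t) x y = c1 * RInt g1 x y + c2 * RInt g2 x y.
Proof.
  intros H1 H2. apply is_RInt_unique.
  apply (is_RInt_plus (V := R_NormedModule) (fun t => c1 * g1 t) (fun t => c2 * g2 t));
    apply (is_RInt_scal (V := R_NormedModule));
    apply (RInt_correct (V := R_CompleteNormedModule)); assumption.
Qed.

Lemma is_integral_RInt (f : R -> R) (x y : R) :
  ex_RInt f x y -> is_integral f x y (RInt f x y).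
Proof. intros H. exists (ex_RInt_Reals_0 f x y H). symmetry. apply RInt_Reals. Qed.

Section HalfLineCalculus.

Variable a : R.

Lemma is_RInt_cont_on (g : R -> R) (x y : R) :
  cont_on a g -> a < x -> a < y -> is_RInt g x y (RInt g x y).
Proof.
  intros Hg Hx Hy. apply (RInt_correct (V := R_CompleteNormedModule)).
  apply (ex_RInt_continuous (V := R_CompleteNormedModule)).
  intros z Hz. apply continuity_pt_filterlim, Hg.
  pose proof (Rmin_glb_lt x y a Hx Hy). lra.
Qed.

Lemma derive_RInt_upper (g : R -> R) (x y : R) :
  cont_on a g -> a < x -> a < y -> derivable_pt_lim (fun w => RInt g x w) y (g y).
Proof.
  intros Hg Hx Hy. apply is_derive_Reals, (is_derive_RInt g (fun w => RInt g x w) x y).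
  - apply (filter_imp (fun w => a < w)); [|apply open_gt; exact Hy].
    intros w Hw. apply is_RInt_cont_on; assumption.
  - apply continuity_pt_filterlim, Hg, Hy.
Qed.

Lemma derive_RInt_lower (g : R -> R) (x y : R) :
  cont_on a g -> a < x -> a < y -> derivable_pt_lim (fun z => RInt g z y) x (- g x).
Proof.
  intros Hg Hx Hy. apply is_derive_Reals, (is_derive_RInt' g (fun z => RInt g z y) x y).
  - apply (filter_imp (fun z => a < z)); [|apply open_gt; exact Hx].
    intros z Hz. apply is_RInt_cont_on; assumption.
  - apply continuity_pt_filterlim, Hg, Hx.
Qed.

Lemma RInt_antiderivative (g G : R -> R) (x y : R) :
  cont_on a g -> (forall t, a < t -> derivable_pt_lim G t (g t)) ->
  a < x -> a < y -> RInt g x y = G y - G x.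
Proof.
  intros Hg HG Hx Hy. pose proof (Rmin_glb_lt x y a Hx Hy).
  apply is_RInt_unique, (is_RInt_derive (V := R_CompleteNormedModule) G g);
    intros t Ht; [apply is_derive_Reals, HG|apply continuity_pt_filterlim, Hg]; lra.
Qed.

End HalfLineCalculus.

Lemma derive_pow_sub (x : R) (n : nat) (t : R) :
  derivable_pt_lim (fun s => (s - x) ^ n) t (INR n * (t - x) ^ pred n).
Proof.
  apply (derivable_pt_lim_val _ _ (INR n * (t - x) ^ pred n * 1)); [ring|].
  apply (derivable_pt_lim_comp (fun s => s - x) (fun z => z ^ n)), derivable_pt_lim_pow.
  apply is_derive_Reals. auto_derive; reflexivity.
Qed.

Lemma derive_sub_pow (y : R) (n : nat) (t : R) :
  derivable_pt_lim (fun s => (y - s) ^ n) t (- (INR n * (y - t) ^ pred n)).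
Proof.
  apply (derivable_pt_lim_val _ _ (INR n * (y - t) ^ pred n * (-1))); [ring|].
  apply (derivable_pt_lim_comp (fun s => y - s) (fun z => z ^ n)), derivable_pt_lim_pow.
  apply is_derive_Reals. auto_derive; reflexivity.
Qed.

Lemma derive_weight (x y : R) (p q : nat) (t : R) :
  derivable_pt_lim (fun s => (s - x) ^ p * (y - s) ^ q) t
    (INR p * (t - x) ^ pred p * (y - t) ^ q - INR q * (t - x) ^ p * (y - t) ^ pred q).
Proof.
  eapply derivable_pt_lim_val;
    [|apply (derivable_pt_lim_mult (fun s => (s - x) ^ p));
      [apply derive_pow_sub|apply derive_sub_pow]].
  cbv beta. ring.
Qed.

Definition beta_int (f : R -> R) (p q : nat) (x y : R) : R :=
  RInt (fun t => f t * (t - x) ^ p * (y - t) ^ q) x y.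

Lemma cont_on_weight (a : R) (g : R -> R) (p q : nat) (x y : R) :
  cont_on a g -> cont_on a (fun t => g t * (t - x) ^ p * (y - t) ^ q).
Proof. intros Hg t Ht. specialize (Hg t Ht). reg. Qed.

Lemma ex_RInt_weight (a : R) (g : R -> R) (p q : nat) (x y z w : R) :
  cont_on a g -> a < z -> a < w ->
  ex_RInt (fun t => g t * (t - x) ^ p * (y - t) ^ q) z w.
Proof.
  intros Hg Hz Hw. eexists. apply (is_RInt_cont_on a); [apply cont_on_weight, Hg|..];
    assumption.
Qed.

Section BetaIntegrals.

Variables (a : R) (f : R -> R).
Hypothesis f_cont : cont_on a f.

(* Splitting t - x = (y - x) - (y - t) in the weight. *)
Lemma beta_int_shift (p q : nat) (x y : R) : a < x -> a < y ->
  beta_int f (S p) q x y = (y - x) * beta_int f p q x y - beta_int f p (S q) x y.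
Proof.
  intros Hx Hy. unfold beta_int.
  replace (_ - _) with
    ((y - x) * RInt (fun t => f t * (t - x) ^ p * (y - t) ^ q) x y
     + (-1) * RInt (fun t => f t * (t - x) ^ p * (y - t) ^ S q) x y) by ring.
  rewrite <- RInt_lincomb by (apply (ex_RInt_weight a f); assumption).
  apply RInt_ext. intros t _. simpl. ring.
Qed.

(* With q = 0 the integrand does not depend on y: plain FTC. *)
Lemma derive_beta_int_upper (p : nat) (x y : R) : a < x -> a < y ->
  derivable_pt_lim (fun w => beta_int f p 0 x w) y (f y * (y - x) ^ p).
Proof.
  intros Hx Hy.
  change (derivable_pt_lim (fun w => RInt (fun t => f t * (t - x) ^ p * 1) x w) y
                           (f y * (y - x) ^ p)).
  apply (derivable_pt_lim_val _ _ (f y * (y - x) ^ p * 1)); [ring|].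
  apply (derive_RInt_upper a (fun t => f t * (t - x) ^ p * 1));
    [exact (cont_on_weight a f p 0 x y f_cont)|assumption..].
Qed.

(* The lower endpoint x also occurs in the weight (t - x)^p; induction on p
   through beta_int_shift reduces to the case p = 0, which is plain FTC.
   The boundary term vanishes unless p = 0. *)
Lemma derive_beta_int_lower (p : nat) : forall (q : nat) (x y : R), a < x -> a < y ->
  derivable_pt_lim (fun z => beta_int f p q z y) x
    (- f x * (x - x) ^ p * (y - x) ^ q - INR p * beta_int f (pred p) q x y).
Proof.
  induction p as [|p IH]; intros q x y Hx Hy.
  - change (derivable_pt_lim (fun z => RInt (fun t => f t * 1 * (y - t) ^ q) z y) x
              (- f x * 1 * (y - x) ^ q - 0 * beta_int f 0 q x y)).
    apply (derivable_pt_lim_val _ _ (- (f x * 1 * (y - x) ^ q))); [ring|].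
    apply (derive_RInt_lower a (fun t => f t * 1 * (y - t) ^ q));
      [exact (cont_on_weight a f 0 q x y f_cont)|assumption..].
  - apply (derivable_pt_lim_locally_ext
             (fun z => (y - z) * beta_int f p q z y - beta_int f p (S q) z y) _ x a (x + 1));
      [lra|intros z Hz; symmetry; apply beta_int_shift; lra|].
    eapply derivable_pt_lim_val;
      [|apply derivable_pt_lim_minus;
          [apply (derivable_pt_lim_mult (fun z => y - z));
             [apply is_derive_Reals; auto_derive; reflexivity|]|];
        apply IH; assumption].
    destruct p as [|p]; simpl pred; [|rewrite (beta_int_shift p q x y Hx Hy)];
      replace (x - x) with 0 by ring; rewrite ?S_INR; simpl; ring.
Qed.

Variable f' : R -> R.
Hypothesis f'_cont : cont_on a f'.
Hypothesis f_deriv : forall t, a < t -> derivable_pt_lim f t (f' t).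

(* Integration by parts: move the derivative from f' onto the weight. *)
Lemma beta_int_parts (p q : nat) (x y : R) : a < x -> a < y ->
  beta_int f' p q x y =
    f y * (y - x) ^ p * (y - y) ^ q - f x * (x - x) ^ p * (y - x) ^ q
    - INR p * beta_int f (pred p) q x y + INR q * beta_int f p (pred q) x y.
Proof.
  intros Hx Hy.
  set (W := fun (g : R -> R) (i j : nat) t => g t * (t - x) ^ i * (y - t) ^ j).
  set (dG := fun t => 1 * W f' p q t
                      + 1 * (INR p * W f (pred p) q t + (- INR q) * W f p (pred q) t)).
  assert (HdG : forall t, a < t ->
            derivable_pt_lim (fun s => f s * ((s - x) ^ p * (y - s) ^ q)) t (dG t)).
  { intros t Ht. eapply derivable_pt_lim_val;
      [|apply (derivable_pt_lim_mult f); [apply f_deriv, Ht|apply derive_weight]].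
    unfold dG, W. ring. }
  assert (HcdG : cont_on a dG).
  { intros t Ht. pose proof (f_cont t Ht). pose proof (f'_cont t Ht). unfold dG, W. reg. }
  assert (Hsplit : (RInt dG x y : R) = beta_int f' p q x y
            + (INR p * beta_int f (pred p) q x y - INR q * beta_int f p (pred q) x y)).
  { assert (Hw : forall g i j, cont_on a g -> ex_RInt (W g i j) x y)
      by (intros g i j Hg; apply (ex_RInt_weight a g); assumption).
    assert (Hw' : ex_RInt (fun t => INR p * W f (pred p) q t + - INR q * W f p (pred q) t) x y)
      by (apply (ex_RInt_plus (V := R_NormedModule));
          apply (ex_RInt_scal (V := R_NormedModule)); auto).
    unfold dG.
    rewrite (RInt_lincomb (W f' p q) _ _ _ _ _ (Hw f' p q f'_cont) Hw'),
      (RInt_lincomb (W f (pred p) q) (W f p (pred q))) by (apply Hw; assumption).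
    unfold beta_int, W. ring. }
  pose proof (RInt_antiderivative a dG _ x y HcdG HdG Hx Hy) as Hftc.
  rewrite Hsplit in Hftc. lra.
Qed.

End BetaIntegrals.

Section DividedPartials.

Variables (a : R) (g g' : R -> R).
Hypotheses (g_cont : cont_on a g) (g'_cont : cont_on a g').
Hypothesis g_deriv : forall t, a < t -> derivable_pt_lim g t (g' t).

Lemma partial_v_step (j : nat) (x y : R) : a < x -> x < y ->
  derivable_pt_lim (fun w => beta_int g j 0 x w / (w - x) ^ S j) y
    (beta_int g' (S j) 0 x y / (y - x) ^ S (S j)).
Proof.
  intros Hx Hxy.
  assert (Hy : a < y) by lra.
  assert (Hyx : y - x <> 0) by lra.
  rewrite (beta_int_parts a g g_cont g' g'_cont g_deriv (S j) 0 x y Hx Hy).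
  eapply derivable_pt_lim_val;
    [|apply (derivable_pt_lim_div (fun w => beta_int g j 0 x w) (fun w => (w - x) ^ S j));
      [apply (derive_beta_int_upper a g g_cont); assumption
      |apply derive_pow_sub
      |apply pow_nonzero; exact Hyx]].
  replace (x - x) with 0 by ring. replace (y - y) with 0 by ring.
  assert (HE : (y - x) ^ j <> 0) by (apply pow_nonzero; exact Hyx).
  unfold Rsqr. simpl pred. rewrite S_INR. simpl pow. rewrite Rmult_0_l.
  change (INR 0) with 0. set (E := (y - x) ^ j) in *. field. split; assumption.
Qed.

Lemma partial_u_step (i j : nat) (x y : R) : a < x -> x < y ->
  derivable_pt_lim (fun z => beta_int g j i z y / (y - z) ^ S (i + j)) x
    (beta_int g' j (S i) x y / (y - x) ^ S (S (i + j))).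
Proof.
  intros Hx Hxy.
  assert (Hy : a < y) by lra.
  assert (Hyx : y - x <> 0) by lra.
  assert (Hshift : INR j * beta_int g (pred j) (S i) x y
                   = INR j * ((y - x) * beta_int g (pred j) i x y - beta_int g j i x y)).
  { destruct j as [|j]; [simpl; ring|].
    simpl pred. rewrite (beta_int_shift a g g_cont j i x y Hx Hy). ring. }
  rewrite (beta_int_parts a g g_cont g' g'_cont g_deriv j (S i) x y Hx Hy), Hshift.
  eapply derivable_pt_lim_val;
    [|apply (derivable_pt_lim_div (fun z => beta_int g j i z y) (fun z => (y - z) ^ S (i + j)));
      [apply (derive_beta_int_lower a g g_cont); assumption
      |apply derive_sub_pow
      |apply pow_nonzero; exact Hyx]].
  replace (x - x) with 0 by ring. replace (y - y) with 0 by ring.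
  assert (HE : (y - x) ^ (i + j) <> 0) by (apply pow_nonzero; exact Hyx).
  unfold Rsqr. simpl pred. rewrite !S_INR, plus_INR.
  replace ((y - x) ^ S (S (i + j))) with ((y - x) * ((y - x) * (y - x) ^ (i + j)))
    by (simpl; ring).
  replace ((y - x) ^ S (i + j)) with ((y - x) * (y - x) ^ (i + j)) by (simpl; ring).
  replace ((y - x) ^ S i) with ((y - x) * (y - x) ^ i) by (simpl; ring).
  simpl pow. rewrite Rmult_0_l.
  set (Z := 0 ^ j). set (Q := (y - x) ^ i). set (E := (y - x) ^ (i + j)) in *.
  field. split; assumption.
Qed.

End DividedPartials.

Definition divided_partial (D : nat -> R -> R) (i j : nat) (x y : R) : R :=
  beta_int (D (S (i + j))) j i x y / (y - x) ^ S (i + j).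

Lemma derivs_upto_cont (h : R -> R) (D : nat -> R -> R) (m : nat) (a : R) :
  derivs_upto h D m a -> cont_on a (D m) -> forall j, (j <= m)%nat -> cont_on a (D j).
Proof.
  intros [_ HD] Hm j Hj t Ht.
  destruct (Nat.eq_dec j m) as [->|Hne]; [apply Hm, Ht|].
  apply derivable_continuous_pt. exists (D (S j) t). apply HD; [lia|exact Ht].
Qed.

Lemma divided_partial_mixed (h : R -> R) (D : nat -> R -> R) (m im jm : nat) (a : R) :
  derivs_upto h D m a -> cont_on a (D m) -> (S (im + jm) <= m)%nat ->
  mixed_partials (Mdiff h) (divided_partial D) im jm a.
Proof.
  intros HDh Hm Hij.
  pose proof (derivs_upto_cont h D m a HDh Hm) as Hc.
  destruct HDh as [HD0 HD].
  split; [|split].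
  - intros x y Hx Hxy. unfold divided_partial, Mdiff. simpl Nat.add.
    rewrite (beta_int_parts a (D 0%nat) (Hc 0%nat ltac:(lia)) (D 1%nat) (Hc 1%nat ltac:(lia))
               (fun t => HD 0%nat t ltac:(lia)) 0 0 x y Hx ltac:(lra)).
    rewrite !HD0 by lra. simpl. field. lra.
  - intros j x y Hj Hx Hxy.
    apply (partial_v_step a); auto; [apply Hc; lia..|intros t; apply HD; lia].
  - intros i x y Hi Hx Hxy.
    apply (partial_u_step a); auto; [apply Hc; lia..|intros t; apply HD; lia].
Qed.

Lemma hazard_exponential (F : R -> R) (l c : R) :
  (forall x, l <= x -> F x = 1 - exp (- c * (x - l))) ->
  forall z, l <= z -> Rhaz F z = c * (z - l).
Proof.
  intros HF z Hz. unfold Rhaz. rewrite HF by exact Hz.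
  replace (1 - (1 - exp (- c * (z - l)))) with (exp (- c * (z - l))) by ring.
  rewrite ln_exp. ring.
Qed.

Lemma hazard_rate_exponential (F Rp : R -> R) (l c : R) :
  (forall x, l <= x -> F x = 1 - exp (- c * (x - l))) ->
  (forall t, l < t -> derivable_pt_lim (Rhaz F) t (Rp t)) ->
  forall t, l < t -> Rp t = c.
Proof.
  intros HF HRp t Ht. apply (uniqueness_limite (Rhaz F) t); [apply HRp, Ht|].
  apply (derivable_pt_lim_locally_ext (fun z => c * (z - l)) _ t l (t + 1)); [lra| |].
  - intros z Hz. symmetry. apply (hazard_exponential F l c HF). lra.
  - apply is_derive_Reals. auto_derive; [exact I|ring].
Qed.

Lemma cond_density_linear_hazard (F Rp : R -> R) (k r : nat) (l c u v t : R) :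
  0 < c -> (forall z, u <= z <= v -> Rhaz F z = c * (z - l)) -> Rp t = c ->
  u < t < v -> (1 <= k)%nat -> (1 <= r)%nat ->
  cond_density F Rp k r u v t
  = coefKR k r / (v - u) ^ (k + r - 1) * ((t - u) ^ (k - 1) * (v - t) ^ (r - 1)).
Proof.
  intros Hc HR HRp Ht Hk Hr. unfold cond_density.
  rewrite !HR, HRp by lra.
  replace (c * (t - l) - c * (u - l)) with (c * (t - u)) by ring.
  replace (c * (v - l) - c * (t - l)) with (c * (v - t)) by ring.
  replace (c * (v - l) - c * (u - l)) with (c * (v - u)) by ring.
  replace (k + r - 1)%nat with (S (k - 1 + (r - 1))) by lia.
  assert (Hvu : v - u <> 0) by lra.
  replace (c * (t - u) / (c * (v - u))) with ((t - u) * / (v - u)) by (field; lra).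
  replace (c * (v - t) / (c * (v - u))) with ((v - t) * / (v - u)) by (field; lra).
  replace (c / (c * (v - u))) with (/ (v - u)) by (field; lra).
  rewrite !Rpow_mult_distr, !pow_inv, <- tech_pow_Rmult, pow_add.
  assert (Hk1 : (v - u) ^ (k - 1) <> 0) by (apply pow_nonzero; exact Hvu).
  assert (Hr1 : (v - u) ^ (r - 1) <> 0) by (apply pow_nonzero; exact Hvu).
  set (A := (v - u) ^ (k - 1)) in *. set (B := (v - u) ^ (r - 1)) in *.
  field. repeat split; assumption.
Qed.

Lemma cond_exp_linear_hazard (F Rp g : R -> R) (k r : nat) (l c u v : R) :
  0 < c -> (forall z, u <= z <= v -> Rhaz F z = c * (z - l)) ->
  (forall t, u < t < v -> Rp t = c) -> cont_on l g -> l < u -> u < v ->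
  (1 <= k)%nat -> (1 <= r)%nat ->
  cond_exp_is F Rp k r g u v
    (coefKR k r / (v - u) ^ (k + r - 1) * beta_int g (k - 1) (r - 1) u v).
Proof.
  intros Hc HR HRp Hg Hu Huv Hk Hr.
  set (W := fun t => g t * (t - u) ^ (k - 1) * (v - t) ^ (r - 1)).
  set (C := coefKR k r / (v - u) ^ (k + r - 1)).
  assert (Hext : forall t, Rmin u v < t < Rmax u v ->
                 C * W t = g t * cond_density F Rp k r u v t).
  { intros t Ht. rewrite Rmin_left, Rmax_right in Ht by lra.
    rewrite (cond_density_linear_hazard F Rp k r l c u v t) by auto.
    unfold C, W. ring. }
  assert (HW : ex_RInt W u v) by (apply (ex_RInt_weight l g); [exact Hg|lra|lra]).
  assert (HCW : ex_RInt (fun t => C * W t) u v)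
    by (apply (ex_RInt_scal (V := R_NormedModule)); exact HW).
  unfold cond_exp_is.
  replace (C * beta_int g (k - 1) (r - 1) u v) with (RInt (fun t => C * W t) u v).
  - rewrite (RInt_ext _ _ u v Hext). apply is_integral_RInt.
    apply (ex_RInt_ext (V := R_NormedModule) _ _ u v Hext HCW).
  - apply (RInt_scal (V := R_CompleteNormedModule)). exact HW.
Qed.

Theorem lemma2 (n k r : nat) (F h Rp : R -> R) (Dh : nat -> R -> R) (l c : R) :
  (2 <= n)%nat -> (1 <= k)%nat -> (k <= n - 1)%nat -> (1 <= r)%nat ->
  0 < c ->
  (* F is the exponential distribution function with l_F = l, r_F = +oo *)
  (forall x, x < l -> F x = 0) ->
  (forall x, l <= x -> F x = 1 - exp (- c * (x - l))) ->
  (* Rp = R' on (l_F, r_F) *)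
  (forall t, l < t -> derivable_pt_lim (Rhaz F) t (Rp t)) ->
  (* h continuous on [l_F, r_F) = [l, +oo) *)
  (forall x, l <= x -> forall eps, 0 < eps -> exists delta, 0 < delta /\
      forall y, l <= y -> Rabs (y - x) < delta -> Rabs (h y - h x) < eps) ->
  (* h^{(j)}, j <= k+r-1, exist on (l, +oo) and h^{(k+r-1)} is continuous there *)
  derivs_upto h Dh (k + r - 1) l ->
  (forall x, l < x -> continuity_pt (Dh (k + r - 1)%nat) x) ->
  forall u v, l < u -> u < v ->
  exists P : nat -> nat -> R -> R -> R,
    mixed_partials (Mdiff h) P (r - 1) (k - 1) l /\
    cond_exp_is F Rp k r (Dh (k + r - 1)%nat) u v
      (coefKR k r * P (r - 1)%nat (k - 1)%nat u v).
Proof.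
  intros _ Hk _ Hr Hc _ HF HRp _ HDh HDc u v Hu Huv.
  exists (divided_partial Dh). split.
  - apply (divided_partial_mixed h Dh (k + r - 1)); [exact HDh|exact HDc|lia].
  - assert (Hvalue : coefKR k r * divided_partial Dh (r - 1) (k - 1) u v
                     = coefKR k r / (v - u) ^ (k + r - 1)
                       * beta_int (Dh (k + r - 1)%nat) (k - 1) (r - 1) u v).
    { unfold divided_partial.
      replace (S (r - 1 + (k - 1))) with (k + r - 1)%nat by lia. unfold Rdiv. ring. }
    rewrite Hvalue.
    apply (cond_exp_linear_hazard F Rp _ k r l c u v); auto.
    + intros z Hz. apply (hazard_exponential F l c HF). lra.
    + intros t Ht. apply (hazard_rate_exponential F Rp l c HF HRp). lra.
Qed.
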